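(* Consider a discrete-time quasi-birth-and-death process (QBD) as described in the context, assumed irreducible and positive recurrent. For $z>0$ let $A(z)=\frac1z A_{-1}+A_0+zA_1$, let $\sigma(z)$ be the Perron–Frobenius eigenvalue of $A(z)$ and $\boldsymbol{u}(z)$ a corresponding strictly positive right eigenvector. Let $z_0$ be the minimal solution of $\sigma'(z)=0$ with $z>1$. Define the vector $\boldsymbol{v}$ on the state space by its level-$i$ subvectors $\boldsymbol{v}_i=z_0^i\,\boldsymbol{u}(z_0)$, $i\ge0$, and let $\lambda_0=\sigma(z_0)$, $C=\ell(0)$ and $$b=\max_{1\le j\le m}\big(B\boldsymbol{v}_0+A_1\boldsymbol{v}_1-\lambda_0\boldsymbol{v}_0\big)_j.$$ Then the drift condition $\mathbf{D}(\boldsymbol{v},\lambda_0,b,C)$ holds.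
   Context: A QBD is a Markov chain $\{X_t\}$ on $\mathbb{E}=\bigcup_{n\ge0}\ell(n)$, $\ell(n)=\{(n,j):1\le j\le m\}$, $m<\infty$, with transition matrix in block form (blocks indexed by levels) whose nonzero blocks are $P_{00}=B$, $P_{01}=A_1$, and for $n\ge1$: $P_{n,n-1}=A_{-1}$, $P_{nn}=A_0$, $P_{n,n+1}=A_1$, where $A_{-1},A_0,A_1,B$ are nonnegative $m\times m$ matrices. Standing assumptions: the chain is irreducible and $A=A_{-1}+A_0+A_1$ is irreducible. Positive recurrence is equivalent to $\boldsymbol{\mu}(A_{-1}-A_1)\boldsymbol{1}>0$, where $\boldsymbol{\mu}$ is the stationary probability vector of $A$. Drift condition $\mathbf{D}(\boldsymbol{v},\lambda,b,C)$: $\boldsymbol{v}$ is a finite vector on $\mathbb{E}$ bounded away from zero, $\lambda\in(0,1)$, $b<\infty$, $C\subset\mathbb{E}$ finite, and $P\boldsymbol{v}\le\lambda\boldsymbol{v}+b\,\mathbb{1}[C]$ componentwise, where $\mathbb{1}[C]$ is the indicator vector of $C$. *)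

From HB Require Import structures.
From mathcomp Require Import all_boot all_order all_algebra.
From mathcomp Require Import all_classical all_reals all_analysis.
From Stdlib Require Import Relation_Operators.
Set Implicit Arguments. Unset Strict Implicit. Unset Printing Implicit Defensive.
Import Order.TTheory GRing.Theory Num.Theory.
Local Open Scope ring_scope.

Section QBD.
Variables (R : realType) (m : nat).

(* States of E: (n, j) = level n, phase j. *)
Definition state := (nat * 'I_m)%type.

Definition qbd_P (Am1 A0 A1 B : 'M[R]_m) (x y : state) : R :=
  let: (n, i) := x in let: (k, j) := y in
  if n == 0%N then
    (if k == 0%N then B i j else if k == 1%N then A1 i j else 0)
  else if k == n.-1 then Am1 i j
  else if k == n then A0 i j
  else if k == n.+1 then A1 i j else 0.

(* (P v)(x).  Row x = (n,i) of P vanishes outside levels <= n+1, so the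
   (infinite) sum over E reduces to the finite sum below. *)
Definition qbd_Pv (Am1 A0 A1 B : 'M[R]_m) (v : state -> R) (x : state) : R :=
  \sum_(k < x.1.+2) \sum_(j < m) qbd_P Am1 A0 A1 B x (nat_of_ord k, j) * v (nat_of_ord k, j).

Definition chain_irreducible (P : state -> state -> R) : Prop :=
  forall x y : state, clos_trans state (fun a b => 0 < P a b) x y.

Definition mx_irreducible (M : 'M[R]_m) : Prop :=
  forall i j : 'I_m, clos_trans 'I_m (fun a b => 0 < M a b) i j.

Definition mx_nonneg (M : 'M[R]_m) : Prop := forall i j, 0 <= M i j.

Definition indic (C : state -> Prop) (x : state) : R :=
  if `[< C x >] then 1 else 0.

Definition drift_cond (Pv : (state -> R) -> state -> R)
    (v : state -> R) (lam b : R) (C : state -> Prop) : Prop :=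
  (exists c : R, 0 < c /\ forall x, c <= v x) /\
  0 < lam < 1 /\
  (exists N : nat, forall x, C x -> (x.1 < N)%N) /\
  forall x, Pv v x <= lam * v x + b * indic C x.

Definition Az (Am1 A0 A1 : 'M[R]_m) (z : R) : 'M[R]_m :=
  z^-1 *: Am1 + A0 + z *: A1.

End QBD.

From Pilot Require Import Defs.
From HB Require Import structures.
From mathcomp Require Import all_boot all_order all_algebra.
From mathcomp Require Import all_classical all_reals all_analysis.
From mathcomp Require Import ring lra zify.
Import Order.TTheory GRing.Theory Num.Theory.
Set Implicit Arguments. Unset Strict Implicit. Unset Printing Implicit Defensive.
Local Open Scope ring_scope.
Import numFieldNormedType.Exports.

(* The level-i blocks of v are z0^i u(z0), so for i >= 1 the vector P v is exactly
   z0^i A(z0) u(z0) = sigma(z0) v_i, while at level 0 the excess over sigma(z0) v_0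
   is at most b by definition.  It remains to see 0 < sigma(z0) < 1; positivity
   holds as sigma(z) >= 1/z for z >= 1.  By Hoelder's inequality and the
   Collatz-Wielandt bounds, the Perron root is geometrically convex:
   sigma(z1^t z2^(1-t)) <= sigma(z1)^t sigma(z2)^(1-t).  Along geometric paths it
   therefore lies below its chords, so the stationary point z0 is a global minimum;
   since A(1) is stochastic, sigma(z0) <= sigma(1) = 1, and equality would force
   sigma to be constant on [1, z0], producing a stationary point in (1, z0). *)

Section WeightedMeans.
Variable R : realType.
Implicit Types (a b c d q t : R).

Lemma powR_split a t : 0 <= a -> a `^ t * a `^ (1 - t) = a.
Proof.
move=> a0; rewrite -powRD; first by rewrite addrC subrK powRr1.
by rewrite addrC subrK oner_eq0.
Qed.

Lemma powRV a t : 0 < a -> a^-1 `^ t = (a `^ t)^-1.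
Proof.
by move=> a0; rewrite /powR !gt_eqF ?invr_gt0 // lnV ?posrE // mulrN expRN.
Qed.

Lemma geo_meanM a b c d t : 0 <= a -> 0 <= b -> 0 <= c -> 0 <= d ->
  (a * b) `^ t * (c * d) `^ (1 - t) = a `^ t * c `^ (1 - t) * (b `^ t * d `^ (1 - t)).
Proof. by move=> a0 b0 c0 d0; rewrite !powRM //; ring. Qed.

Lemma geo_mean_le_arith a b t : 0 <= a -> 0 <= b -> 0 < t < 1 ->
  a `^ t * b `^ (1 - t) <= t * a + (1 - t) * b.
Proof.
move=> a0 b0 /andP[t0 t1].
have s0 : 0 < 1 - t by rewrite subr_gt0.
have := @conjugate_powR R (a `^ t) (b `^ (1 - t)) t^-1 (1 - t)^-1
  (powR_ge0 _ _) (powR_ge0 _ _).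
rewrite !invr_gt0 t0 s0 !invrK addrC subrK => /(_ isT isT erefl).
rewrite -!powRrM !mulfV ?gt_eqF // !powRr1 //.
by rewrite [a * t]mulrC [b * _]mulrC.
Qed.

Lemma holder_sum (I : finType) (p r : I -> R) t :
  (forall k, 0 <= p k) -> (forall k, 0 <= r k) -> 0 < t < 1 ->
  \sum_k p k `^ t * r k `^ (1 - t) <= (\sum_k p k) `^ t * (\sum_k r k) `^ (1 - t).
Proof.
move=> p0 r0 t01; have /andP[t0 t1] := t01.
have [P0|P_neq0] := eqVneq (\sum_k p k) 0.
  rewrite big1 ?mulr_ge0 ?powR_ge0 // => k _.
  by rewrite (psumr_eq0P _ P0) // powR0 ?gt_eqF // mul0r.
have [Q0|Q_neq0] := eqVneq (\sum_k r k) 0.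
  rewrite big1 ?mulr_ge0 ?powR_ge0 // => k _.
  by rewrite (psumr_eq0P _ Q0) // powR0 ?subr_eq0 ?gt_eqF // mulr0.
set P := \sum_k p k in P_neq0 *; set Q := \sum_k r k in Q_neq0 *.
have P_gt0 : 0 < P by rewrite lt0r P_neq0 sumr_ge0.
have Q_gt0 : 0 < Q by rewrite lt0r Q_neq0 sumr_ge0.
(* Normalize both families to total mass 1, then sum the weighted AM-GM inequality. *)
have normalize k : p k `^ t * r k `^ (1 - t) =
   P `^ t * Q `^ (1 - t) * ((p k / P) `^ t * (r k / Q) `^ (1 - t)).
  rewrite -{1}(divfK P_neq0 (p k)) -{1}(divfK Q_neq0 (r k)).
  rewrite [X in X * _ = _]powRM ?divr_ge0 ?(ltW P_gt0) //.
  rewrite [X in _ * X = _]powRM ?divr_ge0 ?(ltW Q_gt0) //; ring.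
rewrite (eq_bigr _ (fun k _ => normalize k)) -mulr_sumr.
rewrite ler_piMr ?mulr_ge0 ?powR_ge0 //.
apply: (@le_trans _ _ (\sum_k (t * (p k / P) + (1 - t) * (r k / Q)))).
  by apply: ler_sum => k _; rewrite geo_mean_le_arith ?divr_ge0 ?p0 ?r0 ?(ltW P_gt0) ?(ltW Q_gt0).
rewrite big_split /= -!mulr_sumr -!mulr_suml -/P -/Q !mulfV //.
by rewrite !mulr1 addrC subrK.
Qed.

Lemma powR_dist1_le q t : 0 < q -> 0 < t < 1 -> `|q `^ t - 1| <= t * (q + q^-1).
Proof.
move=> q0 t01; have /andP[t0 t1] := t01.
have up Q : 1 <= Q -> 0 <= Q `^ t - 1 <= t * Q.
  move=> Q1; have := geo_mean_le_arith (le_trans ler01 Q1) ler01 t01.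
  rewrite powR1 /= !mulr1 => amgm.
  have := ler_powR Q1 (ltW t0); rewrite powRr0 => Q1t.
  by apply/andP; split; lra.
have [q1|q1] := leP 1 q.
  have /andP[h1 h2] := up q q1.
  rewrite ger0_norm //; apply: le_trans h2 _.
  by rewrite ler_pM2l // lerDl invr_ge0 ltW.
have /andP[h1 h2] := up q^-1 (ltW (etrans (invf_gt1 q0) q1)); rewrite powRV // in h1 h2.
have qt0 : 0 < q `^ t by rewrite powR_gt0.
have qt1 : q `^ t <= 1 by rewrite -invf_ge1 // -subr_ge0.
rewrite ler0_norm ?subr_le0 // opprB; apply: (@le_trans _ _ (t * q^-1)).
  apply: le_trans h2; set y := q `^ t in h1 qt0 qt1 *.
  have yV : y * y^-1 = 1 by rewrite mulfV ?gt_eqF.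
  have := @mulr_ge0 _ _ (1 - y) h1; rewrite subr_ge0 => /(_ qt1); nra.
by rewrite ler_pM2l // lerDr ltW.
Qed.

End WeightedMeans.

Section GeometricConvexity.
Variable R : realType.
Implicit Types (f : R -> R) (a b y z t : R).

Definition geo_convex f : Prop := forall z1 z2 t, 0 < z1 -> 0 < z2 -> 0 < t < 1 ->
  f (z1 `^ t * z2 `^ (1 - t)) <= f z1 `^ t * f z2 `^ (1 - t).

Lemma geo_mean_onto a b y : 0 < a -> a < y < b -> exists2 t, 0 < t < 1 & y = a `^ t * b `^ (1 - t).
Proof.
move=> a0 /andP[ay yb]; have y0 := lt_trans a0 ay; have b0 := lt_trans y0 yb.
have lab : 0 < ln b - ln a by rewrite subr_gt0 ltr_ln ?posrE ?(lt_trans ay).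
exists ((ln b - ln y) / (ln b - ln a)).
  apply/andP; split; first by rewrite divr_gt0 // subr_gt0 ltr_ln ?posrE.
  by rewrite ltr_pdivrMr // mul1r ltrD2l ltrN2 ltr_ln ?posrE.
rewrite /powR !gt_eqF // -expRD -[LHS](lnK y0); congr expR.
by field; rewrite gt_eqF.
Qed.

Lemma is_derive0_dist_le f a : is_derive a 1 f 0 ->
  forall e, 0 < e -> exists2 d, 0 < d & forall h, `|h| < d -> `|f (a + h) - f a| <= e * `|h|.
Proof.
move=> [df dv] e e0.
move/cvgr_dist_le : df => /(_ e e0).
rewrite near_withinE => /nbhs_ballP [d d0 H].
exists d => // h hd.
have [->|h0] := eqVneq h 0; first by rewrite addr0 subrr normr0 mulr0.
have := H h; rewrite /ball /= sub0r normrN => /(_ hd h0).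
rewrite -/(derive f a 1) dv sub0r normrN /= normrZ normfV ler_pdivrMl ?normr_gt0 //.
have -> : h%:A = h by rewrite /GRing.scale /= mulr1.
by rewrite [e * _]mulrC [h + a]addrC.
Qed.

(* The geometric path t |-> z^t z0^(1-t) moves away from z0 at speed O(t). *)
Lemma is_derive0_geo_path f z0 z : 0 < z0 -> 0 < z -> is_derive z0 1 f 0 ->
  forall e, 0 < e -> exists2 t, 0 < t < 1 &
    `|f (z `^ t * z0 `^ (1 - t)) - f z0| <= e * t.
Proof.
move=> z00 z_gt0 df e e0; set q := z / z0.
have q0 : 0 < q by rewrite divr_gt0.
set K := z0 * (q + q^-1).
have K0 : 0 < K by rewrite mulr_gt0 ?addr_gt0 ?invr_gt0.
have [d d0 Hd] := is_derive0_dist_le df (divr_gt0 e0 K0).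
pose t := Num.min 2^-1 (d / (2 * K)).
have t0 : 0 < t by rewrite lt_min invr_gt0 ltr0n /= divr_gt0 // mulr_gt0.
have t_half : t <= 2^-1 by rewrite ge_min lexx.
have t_d : t * K <= d / 2.
  rewrite -ler_pdivlMr // -mulrA -invfM.
  by rewrite ge_min lexx orbT.
have t01 : 0 < t < 1 by rewrite t0 (le_lt_trans t_half) // invf_lt1 // ltr1n.
exists t => //; set zt := z `^ t * z0 `^ (1 - t).
have path_near : `|zt - z0| <= t * K.
  rewrite /zt -(divfK (lt0r_neq0 z00) z) -/q powRM ?(ltW q0) ?(ltW z00) //.
  rewrite -mulrA powR_split ?(ltW z00) //.
  rewrite -{2}[z0]mul1r -mulrBl normrM (gtr0_norm z00) mulrC /K mulrCA.
  by rewrite ler_pM2l // powR_dist1_le.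
have zt_near : `|zt - z0| < d.
  by apply: le_lt_trans path_near (le_lt_trans t_d _); rewrite ltr_pdivrMr // ltr_pMr // ltr1n.
have := Hd _ zt_near; rewrite subrKC => /le_trans; apply.
apply: le_trans (ler_wpM2l (ltW (divr_gt0 e0 K0)) path_near) _.
by rewrite [t * K]mulrC mulrA divfK ?lt0r_neq0.
Qed.

Section Minimum.
Variable f : R -> R.
Hypotheses (f_geo_convex : geo_convex f) (f_ge0 : forall z, 0 < z -> 0 <= f z).

(* Along the geometric path, f lies below the chord, so it decreases at rate f z0 - f z. *)
Lemma geo_convex_stationary_min z0 : 0 < z0 -> is_derive z0 1 f 0 ->
  forall z, 0 < z -> f z0 <= f z.
Proof.
move=> z00 df z z_gt0; rewrite leNgt; apply/negP => fz_lt.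
set D := f z0 - f z; have D0 : 0 < D by rewrite subr_gt0.
have [t /andP[t0 t1] near] := is_derive0_geo_path z00 z_gt0 df (divr_gt0 D0 (ltr0n _ 2)).
have chord : f (z `^ t * z0 `^ (1 - t)) <= f z0 - t * D.
  apply: le_trans (f_geo_convex z_gt0 z00 _) _; first by rewrite t0.
  apply: le_trans (geo_mean_le_arith (f_ge0 z_gt0) (f_ge0 z00) _) _; first by rewrite t0.
  by rewrite /D; lra.
have := ler_norm (f z0 - f (z `^ t * z0 `^ (1 - t))); rewrite distrC.
have tD : 0 < t * D by rewrite mulr_gt0.
lra.
Qed.

Lemma geo_convex_stationary_lt a b : 0 < a < b ->
  (forall z, 0 < z -> f b <= f z) -> (forall y, a < y < b -> ~ is_derive y 1 f 0) ->
  f b < f a.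
Proof.
move=> /andP[a0 ab] fb_min no_crit; rewrite lt_neqAle fb_min // andbT.
apply/eqP => fab; pose c := (a + b) / 2.
have flat y : a < y < b -> f y = f b.
  move=> ay; have [t t01 ->] := geo_mean_onto a0 ay.
  apply/eqP; rewrite eq_le fb_min ?mulr_gt0 ?powR_gt0 ?(lt_trans a0 ab) // andbT.
  by apply: le_trans (f_geo_convex a0 (lt_trans a0 ab) t01) _; rewrite fab powR_split ?f_ge0 ?(lt_trans a0 ab).
apply: (no_crit c); first by apply/andP; split; rewrite /c; lra.
apply: (@near_eq_is_derive R R R (cst (f b)) f c 1 0).
apply/nbhs_ballP; exists ((b - a) / 2); first by rewrite /= divr_gt0 // subr_gt0.
move=> y /=; rewrite /ball /= ltr_distlC => /andP[h1 h2].
by rewrite flat //; apply/andP; split; rewrite /c in h1 h2; lra.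
Qed.

End Minimum.
End GeometricConvexity.

Section CollatzWielandt.
Variables (R : realFieldType) (m : nat) (M : 'M[R]_m) (x u : 'cV[R]_m) (c s : R).
Hypotheses (m_gt0 : (0 < m)%N) (M_ge0 : forall i j, 0 <= M i j).
Hypotheses (x_gt0 : forall j, 0 < x j 0) (u_gt0 : forall j, 0 < u j 0).
Hypothesis Mu : M *m u = s *: u.

(* Compare u with x at the index maximizing (resp. minimizing) the ratio u_j / x_j. *)
Lemma eigenvalue_le_subinvariant : (forall i, (M *m x) i 0 <= c * x i 0) -> s <= c.
Proof.
move=> Mx_le; have [i _ ratio_max] := @arg_maxP _ R _ (Ordinal m_gt0) xpredT
  (fun j => u j 0 / x j 0) isT.
have ratio_ge0 : 0 <= u i 0 / x i 0 by rewrite divr_ge0 // ltW.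
rewrite -(ler_pM2r (u_gt0 i)); have -> : s * u i 0 = (M *m u) i 0 by rewrite Mu mxE.
apply: (@le_trans _ _ (u i 0 / x i 0 * (M *m x) i 0)).
  rewrite !mxE mulr_sumr; apply: ler_sum => j _; rewrite mulrCA ler_wpM2l //.
  by rewrite -ler_pdivrMr //; apply: ratio_max.
apply: le_trans (ler_wpM2l ratio_ge0 (Mx_le i)) _.
by rewrite mulrCA divfK ?lt0r_neq0.
Qed.

Lemma eigenvalue_ge_superinvariant : (forall i, c * x i 0 <= (M *m x) i 0) -> c <= s.
Proof.
move=> Mx_ge; have [i _ ratio_min] := @arg_minP _ R _ (Ordinal m_gt0) xpredT
  (fun j => u j 0 / x j 0) isT.
have ratio_ge0 : 0 <= u i 0 / x i 0 by rewrite divr_ge0 // ltW.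
rewrite -(ler_pM2r (u_gt0 i)); have -> : s * u i 0 = (M *m u) i 0 by rewrite Mu mxE.
apply: (@le_trans _ _ (u i 0 / x i 0 * (M *m x) i 0)).
  apply: le_trans _ (ler_wpM2l ratio_ge0 (Mx_ge i)).
  by rewrite mulrCA divfK ?lt0r_neq0.
rewrite !mxE mulr_sumr; apply: ler_sum => j _; rewrite mulrCA ler_wpM2l //.
by rewrite -ler_pdivlMr //; apply: ratio_min.
Qed.

End CollatzWielandt.

Section PerronRoot.
Variables (R : realType) (m : nat) (Am1 A0 A1 : 'M[R]_m).
Variables (sigma : R -> R) (u : R -> 'cV[R]_m).
Hypotheses (m_gt0 : (0 < m)%N).
Hypotheses (Am1_ge0 : mx_nonneg Am1) (A0_ge0 : mx_nonneg A0) (A1_ge0 : mx_nonneg A1).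
Hypothesis perron : forall z, 0 < z ->
  (forall j, 0 < u z j 0) /\ Az Am1 A0 A1 z *m u z = sigma z *: u z.

Local Notation A z := (Az Am1 A0 A1 z).

Lemma Az_ge0 z : 0 < z -> mx_nonneg (A z).
Proof.
move=> z0 i j; rewrite !mxE.
by rewrite !addr_ge0 ?mulr_ge0 ?invr_ge0 ?(ltW z0).
Qed.

Lemma sigma_ge0 z : 0 < z -> 0 <= sigma z.
Proof.
move=> z0; have [u_gt0 Au] := perron z0; pose i := Ordinal m_gt0.
have : 0 <= (A z *m u z) i 0.
  by rewrite mxE sumr_ge0 // => j _; rewrite mulr_ge0 ?Az_ge0 ?ltW.
by rewrite Au mxE pmulr_lge0.
Qed.

(* Each of these 3m terms is a geometric mean in (z, w) when z and w are, so Hoelder applies. *)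
Definition Az_term z (w : 'cV[R]_m) i (s : 'I_m + 'I_m + 'I_m) : R :=
  match s with
  | inl (inl j) => z^-1 * (Am1 i j * w j 0)
  | inl (inr j) => A0 i j * w j 0
  | inr j => z * (A1 i j * w j 0)
  end.

Lemma sum_Az_term z (w : 'cV[R]_m) i : \sum_s Az_term z w i s = (A z *m w) i 0.
Proof.
rewrite !big_sumType /= mxE -!big_split /=; apply: eq_bigr => j _.
by rewrite !mxE; ring.
Qed.

Lemma Az_term_ge0 z (w : 'cV[R]_m) i s : 0 < z -> (forall j, 0 <= w j 0) -> 0 <= Az_term z w i s.
Proof.
by move=> z0 w0; case: s => [[j|j]|j] /=; rewrite !mulr_ge0 ?invr_ge0 ?(ltW z0).
Qed.

Lemma Az_term_geo_mean z1 z2 (w1 w2 : 'cV[R]_m) t i s : 0 < z1 -> 0 < z2 ->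
  (forall j, 0 <= w1 j 0) -> (forall j, 0 <= w2 j 0) ->
  Az_term (z1 `^ t * z2 `^ (1 - t)) (\col_j (w1 j 0 `^ t * w2 j 0 `^ (1 - t))) i s =
  Az_term z1 w1 i s `^ t * Az_term z2 w2 i s `^ (1 - t).
Proof.
move=> z10 z20 w10 w20; case: s => [[j|j]|j] /=; rewrite !geo_meanM ?powR_split ?mxE
  ?mulr_ge0 ?invr_ge0 ?(ltW z10) ?(ltW z20) ?w10 ?w20 ?Am1_ge0 ?A0_ge0 ?A1_ge0 //.
by rewrite !powRV // invfM.
Qed.

Lemma sigma_geo_convex : geo_convex sigma.
Proof.
move=> z1 z2 t z10 z20 t01; set z := z1 `^ t * z2 `^ (1 - t).
have z0 : 0 < z by rewrite mulr_gt0 ?powR_gt0.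
have [u1_gt0 Au1] := perron z10; have [u2_gt0 Au2] := perron z20.
pose x := \col_j (u z1 j 0 `^ t * u z2 j 0 `^ (1 - t)).
have x_gt0 j : 0 < x j 0 by rewrite mxE mulr_gt0 ?powR_gt0.
have [u_gt0 Au] := perron z0.
apply: (eigenvalue_le_subinvariant m_gt0 (Az_ge0 z0) x_gt0 u_gt0 Au) => i.
have u1 : forall j, 0 <= u z1 j 0 by move=> j; exact: ltW.
have u2 : forall j, 0 <= u z2 j 0 by move=> j; exact: ltW.
rewrite -sum_Az_term (eq_bigr _ (fun s _ => Az_term_geo_mean t i s z10 z20 u1 u2)).
apply: le_trans (holder_sum _ _ t01) _; try by move=> s; apply: Az_term_ge0.
by rewrite !sum_Az_term Au1 Au2 !mxE geo_meanM ?sigma_ge0 ?u1 ?u2.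
Qed.

Section Stochastic.
Hypothesis row_sum1 : forall i, \sum_j (Am1 i j + A0 i j + A1 i j) = 1.

Let one : 'cV[R]_m := const_mx 1.

Lemma Az1_one i : (A 1 *m one) i 0 = 1.
Proof.
rewrite mxE -[RHS](row_sum1 i); apply: eq_bigr => j _.
by rewrite !mxE invr1 !mul1r mulr1.
Qed.

Lemma sigma1 : sigma 1 = 1.
Proof.
have [u_gt0 Au] := perron ltr01; have one_gt0 j : 0 < one j 0 by rewrite mxE.
apply/eqP; rewrite eq_le; apply/andP; split.
  by apply: (eigenvalue_le_subinvariant m_gt0 (Az_ge0 ltr01) one_gt0 u_gt0 Au) => i;
    rewrite Az1_one mxE mulr1.
by apply: (eigenvalue_ge_superinvariant m_gt0 (Az_ge0 ltr01) one_gt0 u_gt0 Au) => i;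
  rewrite Az1_one mxE mulr1.
Qed.

Lemma inv_le_sigma z : 1 <= z -> z^-1 <= sigma z.
Proof.
move=> z1; have z0 := lt_le_trans ltr01 z1; have [u_gt0 Au] := perron z0.
have one_gt0 j : 0 < one j 0 by rewrite mxE.
apply: (eigenvalue_ge_superinvariant m_gt0 (Az_ge0 z0) one_gt0 u_gt0 Au) => i.
have zV_le1 : z^-1 <= 1 by rewrite invf_le1.
rewrite mxE mulr1 -[z^-1]mulr1 -(row_sum1 i) mulr_sumr mxE; apply: ler_sum => j _.
rewrite !mxE mulr1 !mulrDr lerD ?lerD ?ler_piMl ?ler_wpM2r //.
exact: le_trans zV_le1 z1.
Qed.

End Stochastic.
End PerronRoot.

Section GeometricVector.
Variables (R : realType) (m : nat) (Am1 A0 A1 B : 'M[R]_m) (z : R) (w : 'cV[R]_m).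

Definition geom_vec (x : state m) : R := z ^+ x.1 * w x.2 0.

Lemma qbd_Pv_geom_vec0 i :
  qbd_Pv Am1 A0 A1 B geom_vec (0%N, i) = (B *m w + z *: (A1 *m w)) i 0.
Proof.
rewrite /qbd_Pv /= !big_ord_recl big_ord0 addr0 /= !mxE mulr_sumr.
congr (_ + _); apply: eq_bigr => j _; rewrite /geom_vec /=.
  by rewrite expr0 mul1r.
by rewrite expr1 mulrCA.
Qed.

Lemma qbd_Pv_geom_vecS n i : z != 0 ->
  qbd_Pv Am1 A0 A1 B geom_vec (n.+1, i) = z ^+ n.+1 * (Az Am1 A0 A1 z *m w) i 0.
Proof.
move=> z_neq0; rewrite /qbd_Pv /=.
set G := fun k : nat => \sum_(j < m) qbd_P Am1 A0 A1 B (n.+1, i) (k, j) * geom_vec (k, j).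
rewrite -(big_mkord xpredT G) !big_nat_recr //= big_nat big1 ?add0r; last first.
  move=> k /andP[_ kn]; rewrite /G big1 // => j _.
  by rewrite /qbd_P /= !ifF ?mul0r //; apply/negbTE/eqP; lia.
have [n1 n2 n3] : [/\ (n.+1 == n) = false, (n.+2 == n) = false & (n.+2 == n.+1) = false].
  by split; apply/negbTE/eqP; lia.
rewrite /G /qbd_P /= eqxx n1 n2 n3 !eqxx mxE mulr_sumr -!big_split /=.
by apply: eq_bigr => j _; rewrite /geom_vec /= !mxE !exprS; field.
Qed.

Lemma geom_vec_bounded_below : (0 < m)%N -> 1 <= z -> (forall j, 0 < w j 0) ->
  exists c, 0 < c /\ forall x, c <= geom_vec x.
Proof.
move=> m_gt0 z1 w_gt0.
have [jm _ w_min] := @arg_minP _ R _ (Ordinal m_gt0) xpredT (fun j => w j 0) isT.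
exists (w jm 0); split=> // -[n j]; apply: le_trans (w_min j isT) _.
by rewrite /geom_vec ler_peMl ?exprn_ege1 ?(ltW (w_gt0 j)).
Qed.

End GeometricVector.

Theorem lemma3p1 (R : realType) (m : nat) (Am1 A0 A1 B : 'M[R]_m)
  (mu : 'rV[R]_m) (sigma : R -> R) (u : R -> 'cV[R]_m) (z0 b : R) :
  mx_nonneg Am1 -> mx_nonneg A0 -> mx_nonneg A1 -> mx_nonneg B ->
  (forall i, \sum_j (B i j + A1 i j) = 1) ->
  (forall i, \sum_j (Am1 i j + A0 i j + A1 i j) = 1) ->
  chain_irreducible (qbd_P Am1 A0 A1 B) ->
  mx_irreducible (Am1 + A0 + A1) ->
  (forall j, 0 <= mu 0 j) -> \sum_j mu 0 j = 1 -> mu *m (Am1 + A0 + A1) = mu ->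
  0 < (mu *m (Am1 - A1) *m (const_mx 1 : 'cV[R]_m)) 0 0 ->
  (forall z, 0 < z -> (forall j, 0 < u z j 0) /\ Az Am1 A0 A1 z *m u z = sigma z *: u z) ->
  1 < z0 -> is_derive z0 1 sigma 0 ->
  (forall z, 1 < z < z0 -> ~ is_derive z 1 sigma 0) ->
  let v := fun x : state m => z0 ^+ x.1 * u z0 x.2 0 in
  let w := fun j : 'I_m =>
    (B *m u z0 + z0 *: (A1 *m u z0) - sigma z0 *: u z0) j 0 in
  (exists j, b = w j) -> (forall j, w j <= b) ->
  drift_cond (qbd_Pv Am1 A0 A1 B) v (sigma z0) b (fun x : state m => x.1 = 0%N).
Proof.
move=> Am1_ge0 A0_ge0 A1_ge0 _ _ row_sum1 _ _ _ mu_sum1 _ _ perron z0_gt1 stationary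
  no_crit v w _ w_le_b.
have m_gt0 : (0 < m)%N.
  rewrite lt0n; apply/negP => /eqP m0; subst m.
  by move: mu_sum1; rewrite big_ord0 => /eqP; rewrite eq_sym oner_eq0.
have z0_gt0 := lt_trans ltr01 z0_gt1.
have sigma_nneg := sigma_ge0 m_gt0 Am1_ge0 A0_ge0 A1_ge0 perron.
have sigma_convex := sigma_geo_convex m_gt0 Am1_ge0 A0_ge0 A1_ge0 perron.
have sigma_min := geo_convex_stationary_min sigma_convex sigma_nneg z0_gt0 stationary.
have sigma_z0_lt1 : sigma z0 < 1.
  rewrite -(sigma1 m_gt0 Am1_ge0 A0_ge0 A1_ge0 perron row_sum1).
  by apply: geo_convex_stationary_lt; rewrite ?ltr01.
have sigma_z0_gt0 : 0 < sigma z0.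
  apply: lt_le_trans (inv_le_sigma m_gt0 Am1_ge0 A0_ge0 A1_ge0 perron row_sum1 (ltW z0_gt1)).
  by rewrite invr_gt0.
have [u_gt0 Au] := perron _ z0_gt0.
split; first exact: geom_vec_bounded_below m_gt0 (ltW z0_gt1) u_gt0.
split; first by rewrite sigma_z0_gt0.
split; first by exists 1%N => -[n j] /= ->.
case=> -[|n] i; rewrite /Defs.indic /=.
  rewrite asboolT // mulr1 (qbd_Pv_geom_vec0 _ _ _ _ z0 (u z0)) /v /= expr0 mul1r.
  by have := w_le_b i; rewrite /w !mxE; lra.
rewrite asboolF // mulr0 addr0 (qbd_Pv_geom_vecS _ _ _ _ _ _ _ (lt0r_neq0 z0_gt0)).
by rewrite Au mxE mulrCA.
Qed.
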